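(* Let $\Gamma=\{f_1,\dots,f_n\}$ be a family of weight-functions invariant under translations, i.e. $f_i(x_1+\lambda,\dots,x_n+\lambda)=f_i(x_1,\dots,x_n)$ for every $i$, every $\mathbf{x}\in[0,1]^n$ and every $\lambda\in[0,1]$ with $(x_1+\lambda,\dots,x_n+\lambda)\in[0,1]^n$. Then $\mathsf{BGM}_\Gamma$ (i.e. $\mathbf{x}\mapsto\sum_i f_i(\mathbf{x})x_i$) is a pre-aggregation function which is $(k,\dots,k)$-increasing for every $k>0$.
   Context: A family of weight-functions (FWF) is a family $\Gamma=\{f_i:[0,1]^n\to[0,1]\mid 1\le i\le n\}$ with $\sum_{i=1}^n f_i(\mathbf{x})=1$ for all $\mathbf{x}\in[0,1]^n$; $\mathsf{BGM}_\Gamma(\mathbf{x})=\sum_{i=1}^n f_i(\mathbf{x})\,x_i$. For a nonzero $\mathbf{r}\in\mathbb{R}^n$, $F:[0,1]^n\to[0,1]$ is $\mathbf{r}$-increasing if $F(\mathbf{x})\le F(x_1+tr_1,\dots,x_n+tr_n)$ for all $\mathbf{x}\in[0,1]^n$ and $t>0$ with $(x_1+tr_1,\dots,x_n+tr_n)\in[0,1]^n$. $F$ is a pre-aggregation function if $F(0,\dots,0)=0$, $F(1,\dots,1)=1$ and $F$ is $\mathbf{r}$-increasing for some nonzero $\mathbf{r}\in[0,1]^n$. *)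

From HB Require Import structures.
From mathcomp Require Import all_boot all_order all_algebra.
From mathcomp Require Import reals.
Set Implicit Arguments. Unset Strict Implicit. Unset Printing Implicit Defensive.
Import Order.TTheory GRing.Theory Num.Theory.
Local Open Scope ring_scope.

Section Defs.
Variables (R : realType) (n : nat).

Definition in_cube (x : 'I_n -> R) : Prop := forall i, 0 <= x i <= 1.

Definition FWF (f : 'I_n -> ('I_n -> R) -> R) : Prop :=
  (forall i x, in_cube x -> 0 <= f i x <= 1) /\
  (forall x, in_cube x -> \sum_(i < n) f i x = 1).

Definition BGM (f : 'I_n -> ('I_n -> R) -> R) (x : 'I_n -> R) : R :=
  \sum_(i < n) f i x * x i.

Definition r_increasing (r : 'I_n -> R) (F : ('I_n -> R) -> R) : Prop :=
  forall (x : 'I_n -> R) (t : R), in_cube x -> 0 < t ->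
    in_cube (fun i => x i + t * r i) -> F x <= F (fun i => x i + t * r i).

Definition pre_aggregation (F : ('I_n -> R) -> R) : Prop :=
  (forall x, in_cube x -> 0 <= F x <= 1) /\
  F (fun _ => 0) = 0 /\ F (fun _ => 1) = 1 /\
  exists r : 'I_n -> R, r <> (fun _ => 0) /\ in_cube r /\ r_increasing r F.

Definition translation_invariant (g : ('I_n -> R) -> R) : Prop :=
  forall (x : 'I_n -> R) (lam : R), in_cube x -> 0 <= lam <= 1 ->
    in_cube (fun i => x i + lam) -> g (fun i => x i + lam) = g x.

End Defs.

From HB Require Import structures.
From mathcomp Require Import all_boot all_order all_algebra.
From mathcomp Require Import reals.
Import Order.TTheory GRing.Theory Num.Theory.
Local Open Scope ring_scope.

(* With translation-invariant weights, BGM commutes with diagonal shifts: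
   BGM (x + lam) = BGM x + lam, since the weights sum to 1. Hence BGM grows
   along every direction (k, ..., k) with k > 0. Being a convex combination
   of the coordinates, BGM maps the cube into [0,1] and fixes constants. *)

Lemma in_cube_cst {R : realType} {n : nat} (c : R) :
  0 <= c <= 1 -> in_cube (fun _ : 'I_n => c).
Proof. by move=> c01 i. Qed.

Lemma in_cube_shift_le1 {R : realType} {n : nat} {x : 'I_n -> R} {c : R} (i : 'I_n) :
  in_cube x -> in_cube (fun j => x j + c) -> c <= 1.
Proof.
move=> /(_ i)/andP[x_ge0 _] /(_ i)/andP[_ xc_le1].
by apply: le_trans xc_le1; rewrite lerDr.
Qed.

Section BGM.
Context {R : realType} {n : nat} {f : 'I_n -> ('I_n -> R) -> R}.
Hypothesis fwf : FWF f.

Lemma FWF_dim_gt0 : (0 < n)%N.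
Proof.
case: n f fwf => [|m] g [_ gsum] //.
have zero01 : 0 <= (0 : R) <= 1 by rewrite lexx ler01.
have := gsum _ (in_cube_cst _ zero01).
by rewrite big_ord0 => /eqP; rewrite eq_sym oner_eq0.
Qed.

Lemma BGM_in01 (x : 'I_n -> R) : in_cube x -> 0 <= BGM f x <= 1.
Proof.
move=> xC; have [f01 fsum] := fwf.
apply/andP; split.
  apply: sumr_ge0 => i _.
  by case/andP: (f01 i x xC) => fi_ge0 _; case/andP: (xC i) => xi_ge0 _; rewrite mulr_ge0.
rewrite -(fsum x xC); apply: ler_sum => i _.
by case/andP: (f01 i x xC) => fi_ge0 _; case/andP: (xC i) => _ xi_le1; rewrite ler_piMr.
Qed.

Lemma BGM_cst (c : R) : 0 <= c <= 1 -> BGM f (fun _ => c) = c.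
Proof.
move=> c01; rewrite /BGM -mulr_suml (fwf.2 _ (in_cube_cst _ c01)).
exact: mul1r.
Qed.

Hypothesis f_ti : forall i, translation_invariant (f i).

Lemma BGM_translate (x : 'I_n -> R) (lam : R) :
  in_cube x -> 0 <= lam <= 1 -> in_cube (fun i => x i + lam) ->
  BGM f (fun i => x i + lam) = BGM f x + lam.
Proof.
move=> xC lam01 xlamC; rewrite /BGM.
under eq_bigr => i _ do rewrite (f_ti i x lam xC lam01 xlamC) mulrDr.
by rewrite big_split /= -mulr_suml (fwf.2 x xC) mul1r.
Qed.

Lemma BGM_diag_increasing (k : R) : 0 < k -> r_increasing (fun _ => k) (BGM f).
Proof.
move=> k_gt0 x t xC t_gt0 xtC.
have tk_ge0 : 0 <= t * k by rewrite mulr_ge0 ?ltW.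
have tk_le1 := in_cube_shift_le1 (Ordinal FWF_dim_gt0) xC xtC.
by rewrite BGM_translate ?tk_ge0 ?tk_le1 // lerDl.
Qed.

End BGM.

Theorem corollary2 (R : realType) (n : nat) (f : 'I_n -> ('I_n -> R) -> R) :
  FWF f -> (forall i, translation_invariant (f i)) ->
  pre_aggregation (BGM f) /\
  (forall k : R, 0 < k -> r_increasing (fun _ => k) (BGM f)).
Proof.
move=> fwf f_ti.
have incr := BGM_diag_increasing fwf f_ti.
have zero01 : 0 <= (0 : R) <= 1 by rewrite lexx ler01.
have one01 : 0 <= (1 : R) <= 1 by rewrite lexx ler01.
split=> //; split; first exact: BGM_in01.
split; first exact: BGM_cst.
split; first exact: BGM_cst.
exists (fun _ => 1); split; last by split; [exact: in_cube_cst | exact: incr].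
by move/(congr1 (fun g => g (Ordinal (FWF_dim_gt0 fwf))))/eqP; rewrite oner_eq0.
Qed.
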